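(* Let $d\ge1$ be odd, $\mathcal{H}=\mathbb{C}^d$ and $\mathcal{K}=\mathbb{C}^2$. Suppose there exists a quaternion matrix $A\in\mathbb{H}^{d\times d}$ which is Hermitian ($A^\dagger=A$), satisfies $\operatorname{Re}A=0$ (every entry has zero real part), and has eigenvalue $d-1$ with multiplicity $\frac{d+1}2$ and eigenvalue $-(d+1)$ with multiplicity $\frac{d-1}2$. Then there exists a unitary $U\in\mathcal{B}(\mathcal{H}\otimes\mathcal{K})$ with $$\frac1{2d}\operatorname{tr}\big[U\,\overline U^{T_2}\big]=-1+\frac2{d^2}.$$
   Context: Quaternions $q=x_0+x_1i+x_2j+x_3k$ are identified with complex $2\times2$ matrices via $\hat q=\begin{pmatrix}x_0+ix_1&x_2+ix_3\\-x_2+ix_3&x_0-ix_1\end{pmatrix}$; a matrix $A\in\mathbb{H}^{d\times d}$ is identified with the complex $2d\times2d$ matrix $\hat A$ consisting of the $2\times2$ blocks $\hat A_{kl}$, i.e. with an element of $\mathcal{M}_d(\mathbb{C})\otimes\mathcal{M}_2(\mathbb{C})\cong\mathcal{B}(\mathcal{H}\otimes\mathcal{K})$. $A^\dagger$ is the quaternionic conjugate transpose (corresponding to $\hat A^\dagger$), $\operatorname{Re}q=x_0$. The eigenvalues of a quaternion matrix $A$ (right eigenvalues $Ax=x\lambda$) are the complex eigenvalues of $\hat A$ with nonnegative imaginary part; for Hermitian $A$ they are real, and an eigenvalue of $A$ of multiplicity $m$ is an eigenvalue of $\hat A$ of multiplicity $2m$. The partial transpose $T_2$ acts on the $\mathcal{K}$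 factor in the product basis, $(X\otimes Y)^{T_2}=X\otimes Y^T$, and $\overline U$ is the entrywise complex conjugate. *)

From HB Require Import structures.
From mathcomp Require Import all_boot all_order all_algebra.
From mathcomp Require Import complex.
From mathcomp Require Import Rstruct.
Set Implicit Arguments. Unset Strict Implicit. Unset Printing Implicit Defensive.
Import Order.TTheory GRing.Theory Num.Theory.
Local Open Scope ring_scope.

Notation Rr := Rdefinitions.R.
Notation C := (Rr[i]).

(* quaternions q = x0 + x1 i + x2 j + x3 k *)
Record quat := Quat { qx0 : Rr; qx1 : Rr; qx2 : Rr; qx3 : Rr }.

Definition qconj (q : quat) : quat := Quat (qx0 q) (- qx1 q) (- qx2 q) (- qx3 q).

Definition qhat (q : quat) : 'M[C]_2 :=
  \matrix_(a < 2, b < 2)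
    if (a == 0 :> nat) && (b == 0 :> nat) then Complex (qx0 q) (qx1 q)
    else if (a == 0 :> nat) then Complex (qx2 q) (qx3 q)
    else if (b == 0 :> nat) then Complex (- qx2 q) (qx3 q)
    else Complex (qx0 q) (- qx1 q).

(* H (x) K = C^d (x) C^2 with product basis indexed by (k, a);
   the basis vector e_k (x) f_a has index mxvec_index k a in 'I_(d * 2). *)
Definition tidx (d : nat) (r : 'I_(d * 2)) : 'I_d * 'I_2 :=
  enum_val (cast_ord (esym (mxvec_cast d 2)) r).

Definition qmxhat (d : nat) (A : 'M[quat]_d) : 'M[C]_(d * 2) :=
  \matrix_(r, c) qhat (A (tidx r).1 (tidx c).1) (tidx r).2 (tidx c).2.

Definition qadj (d : nat) (A : 'M[quat]_d) : 'M[quat]_d :=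
  \matrix_(k, l) qconj (A l k).

Definition qhermitian (d : nat) (A : 'M[quat]_d) : Prop := qadj A = A.

Definition qre_zero (d : nat) (A : 'M[quat]_d) : Prop :=
  forall k l, qx0 (A k l) = 0.

Definition mxconj (n : nat) (M : 'M[C]_n) : 'M[C]_n := map_mx (@conjc _) M.
Definition mxadj (n : nat) (M : 'M[C]_n) : 'M[C]_n := (mxconj M)^T.

Definition unitary (n : nat) (U : 'M[C]_n) : Prop :=
  U *m mxadj U = 1%:M /\ mxadj U *m U = 1%:M.

(* partial transpose on the K factor:
   (X^{T2})_{(k,a),(l,b)} = X_{(k,b),(l,a)}, so (X (x) Y)^{T2} = X (x) Y^T *)
Definition ptrans2 (d : nat) (X : 'M[C]_(d * 2)) : 'M[C]_(d * 2) :=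
  \matrix_(r, c) X (mxvec_index (tidx r).1 (tidx c).2)
                   (mxvec_index (tidx c).1 (tidx r).2).

From mathcomp Require Import all_boot all_algebra.
From mathcomp Require Import complex.
From mathcomp Require Import Rstruct ring.
Import GRing.Theory Num.Theory.
Set Implicit Arguments. Unset Strict Implicit. Unset Printing Implicit Defensive.
Local Open Scope ring_scope.

(* Write M for the Hermitian matrix hat A. Its two eigenvalues d - 1 and
   -(d + 1) give (M - (d - 1))(M + (d + 1)) = 0, i.e. (1 + M)^2 = d^2; the
   multiplicities, and with them the parity of d, play no further role. So
   U := (1 + M)/d is Hermitian and squares to 1, hence unitary. Since the
   real parts of the entries of A vanish, conj(M)^{T2} = -M, so
   conj(U)^{T2} = (1 - M)/d and
   U conj(U)^{T2} = ((1 + M)(1 - M))/d^2 = (2(1 + M) - d^2)/d^2,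
   whose trace is 2d(2 - d^2)/d^2 because tr M = 0. *)

Section ConjugateTranspose.
Variable m : nat.
Implicit Types (X Y : 'M[C]_m) (c : C).

Lemma mxconjD X Y : mxconj (X + Y) = mxconj X + mxconj Y.
Proof. exact: map_mxD. Qed.

Lemma mxconjN X : mxconj (- X) = - mxconj X.
Proof. exact: map_mxN. Qed.

Lemma mxconjZ c X : mxconj (c *: X) = (c^*)%C *: mxconj X.
Proof. exact: map_mxZ. Qed.

Lemma mxconj_scalar c : mxconj (c%:M : 'M[C]_m) = (c^*)%C%:M.
Proof. exact: map_scalar_mx. Qed.

Lemma mxadjD X Y : mxadj (X + Y) = mxadj X + mxadj Y.
Proof. by rewrite /mxadj mxconjD linearD. Qed.

Lemma mxadjB X Y : mxadj (X - Y) = mxadj X - mxadj Y.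
Proof. by rewrite /mxadj mxconjD mxconjN linearB. Qed.

Lemma mxadjZ c X : mxadj (c *: X) = (c^*)%C *: mxadj X.
Proof. by rewrite /mxadj mxconjZ linearZ. Qed.

Lemma mxadj_scalar c : mxadj (c%:M : 'M[C]_m) = (c^*)%C%:M.
Proof. by rewrite /mxadj mxconj_scalar tr_scalar_mx. Qed.

Lemma mxadjM X Y : mxadj (X *m Y) = mxadj Y *m mxadj X.
Proof. by rewrite /mxadj /mxconj map_mxM trmx_mul. Qed.

(* (X X)_ii = (X X^dagger)_ii is a sum of squared moduli. *)
Lemma hermitian_sqr_eq0 X : mxadj X = X -> X *m X = 0 -> X = 0.
Proof.
move=> hermX XX0; apply/matrixP => i j; rewrite mxE.
have := congr1 (fun Y : 'M[C]_m => Y i i) XX0.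
rewrite !mxE -{2}hermX => sum0.
have /eqP : X i j * mxadj X j i = 0.
  by apply: (psumr_eq0P _ sum0) => // l _; rewrite !mxE mulcJ_ge0.
by rewrite !mxE mulf_eq0 conjc_eq0 orbb => /eqP.
Qed.

Lemma unitary_hermitian_involutive X :
  mxadj X = X -> X *m X = 1%:M -> unitary X.
Proof. by move=> hermX XX1; rewrite /unitary hermX. Qed.

End ConjugateTranspose.

Lemma hermitian_expr n (X : 'M[C]_n.+1) j : mxadj X = X -> mxadj (X ^+ j) = X ^+ j.
Proof.
move=> hermX; elim: j => [|j IHj].
  by rewrite expr0 mxadj_scalar rmorph1.
by rewrite exprS -mulmxE mxadjM IHj hermX mulmxE -exprSr -exprS.
Qed.

Lemma hermitian_expr_eq0 n (X : 'M[C]_n.+1) j :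
  mxadj X = X -> X ^+ j = 0 -> X = 0.
Proof.
move=> hermX; case: j => [/eqP|j]; first by rewrite expr0 oner_eq0.
elim: j => [|j IHj XSSj0]; first by rewrite expr1.
apply: IHj; apply: hermitian_sqr_eq0; first exact: hermitian_expr.
by rewrite mulmxE -exprD addSn -addnS exprD XSSj0 mulr0.
Qed.

Lemma commr_mul_expr_eq0 (R : pzRingType) (x y : R) k l :
  GRing.comm x y -> x ^+ k * y ^+ l = 0 -> (x * y) ^+ (l + k) = 0.
Proof.
move=> cxy xy0; rewrite exprMn_comm // !exprD.
by rewrite mulrA -(mulrA _ (x ^+ k)) xy0 mulr0 mul0r.
Qed.

Lemma hermitian_two_eigenvalues_mul_eq0 n (X : 'M[C]_n.+1) (a b : Rr) k l :
  mxadj X = X ->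
  char_poly X = ('X - (a%:C)%C%:P) ^+ k * ('X - (b%:C)%C%:P) ^+ l ->
  (X - (a%:C)%C%:M) *m (X - (b%:C)%C%:M) = 0.
Proof.
move=> hermX charX; set P := X - _; set Q := X - _.
have cXs c : GRing.comm X c%:M by rewrite /GRing.comm -!mulmxE scalar_mxC.
have css c c' : GRing.comm (c%:M : 'M[C]_n.+1) c'%:M.
  by rewrite /GRing.comm -!mulmxE -!scalar_mxM mulrC.
have cPQ : GRing.comm P Q.
  apply: commrB; last exact/commr_sym/commrB/css/commr_sym.
  exact/commr_sym/commrB/cXs/commr_refl.
have hermP c : mxadj (X - (c%:C)%C%:M) = X - (c%:C)%C%:M.
  by rewrite mxadjB hermX mxadj_scalar conjc_real.
have PkQl0 : P ^+ k * Q ^+ l = 0.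
  have := Cayley_Hamilton X.
  by rewrite charX rmorphM !rmorphXn !rmorphB /= horner_mx_X !horner_mx_C.
apply: (@hermitian_expr_eq0 _ _ (l + k)); last first.
  by rewrite mulmxE; apply: commr_mul_expr_eq0.
by rewrite mxadjM !hermP mulmxE cPQ.
Qed.

Section OneAddSquare.
Variables (n : nat) (X : 'M[C]_n.+1) (D : C).

Lemma sqr_one_add_eq_scalar :
  (X - (D - 1)%:M) *m (X + (D + 1)%:M) = 0 -> (1 + X) ^+ 2 = (D ^+ 2)%:M.
Proof.
move=> annX.
have factor : (1 + 'X) ^+ 2 = ('X - D%:P + 1) * ('X + D%:P + 1) + D%:P ^+ 2.
  ring.
have := congr1 (horner_mx X) factor.
rewrite !rmorphXn !rmorphD rmorphM !rmorphD rmorphN rmorphXn rmorph1 /=.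
rewrite !horner_mx_X !horner_mx_C.
have -> : X - D%:M + 1 = X - (D - 1)%:M by rewrite raddfB /= opprB addrA addrAC.
have -> : X + D%:M + 1 = X + (D + 1)%:M by rewrite raddfD /= addrA.
by rewrite -mulmxE annX add0r.
Qed.

Lemma mxtrace_one_add_mul_one_sub :
  \tr X = 0 -> (1 + X) ^+ 2 = (D ^+ 2)%:M ->
  \tr ((1 + X) * (1 - X)) = (2 - D ^+ 2) * n.+1%:R.
Proof.
move=> trX sqrX.
have -> : (1 + X) * (1 - X) = (1 + X) *+ 2 - (1 + X) ^+ 2.
  rewrite expr2 -mulr_natr -mulrBr; congr (_ * _).
  by rewrite mulr2n opprD addrA addrK.
rewrite sqrX raddfB raddfMn raddfD /= trX mxtrace1 mxtrace_scalar; ring.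
Qed.

End OneAddSquare.

Section QuaternionMatrix.
Variable d : nat.
Implicit Types (A : 'M[quat]_d) (X : 'M[C]_(d * 2)).

Lemma tidx_mxvec_index (k : 'I_d) (a : 'I_2) : tidx (mxvec_index k a) = (k, a).
Proof. by rewrite /tidx /mxvec_index cast_ordK enum_rankK. Qed.

Lemma eq_mxvec_index (k l : 'I_d) (a b : 'I_2) :
  (mxvec_index k a == mxvec_index l b) = (k == l) && (a == b).
Proof.
apply/eqP/andP => [kalb|[/eqP-> /eqP->]//].
by have := congr1 (@tidx d) kalb; rewrite !tidx_mxvec_index => -[-> ->].
Qed.

Lemma qmxhatE A k a l b :
  qmxhat A (mxvec_index k a) (mxvec_index l b) = qhat (A k l) a b.
Proof. by rewrite mxE !tidx_mxvec_index. Qed.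

Lemma ptrans2E X k a l b :
  ptrans2 X (mxvec_index k a) (mxvec_index l b)
  = X (mxvec_index k b) (mxvec_index l a).
Proof. by rewrite mxE !tidx_mxvec_index. Qed.

Lemma ptrans2D X Y : ptrans2 (X + Y) = ptrans2 X + ptrans2 Y.
Proof. by apply/matrixP => r c; rewrite !mxE. Qed.

Lemma ptrans2Z (c : C) X : ptrans2 (c *: X) = c *: ptrans2 X.
Proof. by apply/matrixP => r c'; rewrite !mxE. Qed.

Lemma ptrans2_scalar (c : C) : ptrans2 (c%:M : 'M[C]_(d * 2)) = c%:M.
Proof.
apply/matrixP => r s; case/mxvec_indexP: r => k a; case/mxvec_indexP: s => l b.
by rewrite ptrans2E !mxE !eq_mxvec_index [b == a]eq_sym.
Qed.

Lemma qmxhat_hermitian A : qhermitian A -> mxadj (qmxhat A) = qmxhat A.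
Proof.
move=> hermA; apply/matrixP => r s.
case/mxvec_indexP: r => k a; case/mxvec_indexP: s => l b.
rewrite /mxadj /mxconj !mxE !tidx_mxvec_index /=.
have -> : A k l = qconj (A l k) by rewrite -{1}hermA mxE.
by case: a => [[|[|//]] ?]; case: b => [[|[|//]] ?]; rewrite /qhat /= ?opprK.
Qed.

Section RealPartZero.
Variables (A : 'M[quat]_d) (reA : qre_zero A).

Lemma mxtrace_qmxhat : \tr (qmxhat A) = 0.
Proof.
rewrite /mxtrace (reindex (fun p : 'I_d * 'I_2 => mxvec_index p.1 p.2)) /=.
  rewrite -(pair_big xpredT xpredT
             (fun k a => qmxhat A (mxvec_index k a) (mxvec_index k a))) /=.
  apply: big1 => k _; rewrite big_ord_recl big_ord1 !qmxhatE !mxE /= reA.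
  by apply/eqP; rewrite eq_complex /= !addr0 subrr eqxx.
exists (@tidx d) => [p _|r _]; first by rewrite tidx_mxvec_index -surjective_pairing.
by case/mxvec_indexP: r => k a; rewrite tidx_mxvec_index.
Qed.

(* Conjugating and then transposing the K factor is the conjugate transpose of
   each 2x2 block; with Re A = 0 a block hat(A_kl) = [[i x1, z], [-z^*, -i x1]]
   is anti-Hermitian. *)
Lemma ptrans2_mxconj_qmxhat : ptrans2 (mxconj (qmxhat A)) = - qmxhat A.
Proof.
apply/matrixP => r s; case/mxvec_indexP: r => k a; case/mxvec_indexP: s => l b.
rewrite ptrans2E /mxconj !mxE !tidx_mxvec_index /=.
case: a => [[|[|//]] ?]; case: b => [[|[|//]] ?].
all: by rewrite /qhat /= ?reA; simpc; rewrite ?oppr0 ?opprK.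
Qed.

End RealPartZero.
End QuaternionMatrix.

Theorem proposition10 (d : nat) (hd1 : (1 <= d)%N) (hodd : odd d) :
  (exists A : 'M[quat]_d,
      qhermitian A /\ qre_zero A /\
      char_poly (qmxhat A) =
        ('X - (Complex (d%:R - 1 : Rr) 0)%:P) ^+ (d.+1./2 * 2)
        * ('X - (Complex (- (d%:R + 1) : Rr) 0)%:P) ^+ (d.-1./2 * 2)) ->
  exists U : 'M[C]_(d * 2),
    unitary U /\
    (2 * d%:R)^-1 * \tr (U *m ptrans2 (mxconj U)) = -1 + 2 / (d%:R ^+ 2).
Proof.
move=> [A [hermA [reA charA]]].
case: d hd1 hodd A hermA reA charA => [//|d] _ _ A hermA reA charA.
set M := qmxhat A in charA *.
have hermM : mxadj M = M := qmxhat_hermitian hermA.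
set D : C := d.+1%:R.
have D0 : D != 0 by rewrite pnatr_eq0.
have eigenvaluesE :
    ((d.+1%:R - 1 : Rr)%:C)%C = D - 1 /\ ((- (d.+1%:R + 1) : Rr)%:C)%C = - (D + 1).
  by rewrite rmorphB rmorphN rmorphD !rmorph_nat rmorph1.
have annM : (M - (D - 1)%:M) *m (M + (D + 1)%:M) = 0.
  have := hermitian_two_eigenvalues_mul_eq0 hermM charA.
  by case: eigenvaluesE => -> ->; rewrite raddfN opprK.
have sqrM := sqr_one_add_eq_scalar annM.
exists (D^-1 *: (1 + M)); split.
  apply: unitary_hermitian_involutive.
    by rewrite mxadjZ mxadjD hermM mxadj_scalar rmorph1 conjc_inv conjc_nat.
  rewrite -scalemxAl -scalemxAr scalerA mulmxE -[(1 + M) * _]expr2 sqrM.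
  by rewrite scale_scalar_mx; congr (_%:M); field; rewrite addrC natr1.
rewrite mxconjZ mxconjD mxconj_scalar rmorph1 ptrans2Z ptrans2D ptrans2_scalar.
rewrite ptrans2_mxconj_qmxhat // conjc_inv conjc_nat.
rewrite -scalemxAl -scalemxAr scalerA mxtraceZ mulmxE.
rewrite (mxtrace_one_add_mul_one_sub (mxtrace_qmxhat reA) sqrM).
rewrite -[(d * 2).+2]/(d.+1 * 2)%N natrM.
by field; rewrite addrC natr1.
Qed.
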